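(* Let $p\ge 2$, let $\mathcal{N}$ be a finite nonempty index set, let $\{\hat{\bm{\Sigma}}(t_i)\}_{i\in\mathcal{N}}$ be $p\times p$ symmetric positive semidefinite matrices with entries $\hat{\Sigma}_{uv}(t_i)$, and let $\lambda>0$. For a tuple $\mathbb{\Omega}=\{\bm{\Omega}(t_i)\}_{i\in\mathcal{N}}$ of $p\times p$ symmetric positive definite matrices define $$L(\mathbb{\Omega})=\frac{1}{\sqrt{|\mathcal{N}|}}\sum_{i\in\mathcal{N}}\Big[\operatorname{tr}\big(\bm{\Omega}(t_i)\hat{\bm{\Sigma}}(t_i)\big)-\log\det\bm{\Omega}(t_i)\Big]+\lambda\sum_{u\neq v}\sqrt{\sum_{i\in\mathcal{N}}\Omega_{uv}(t_i)^2},$$ and let $\{\hat{\bm{\Omega}}(t_i)\}_{i\in\mathcal{N}}$ be its minimizer over tuples of positive definite matrices. Let $\{G_1,G_2\}$ be a partition of $\{1,\dots,p\}$ into two disjoint sets. Then the variables in $G_1$ are completely disconnected from those in $G_2$ in all estimated precision matrices, i.e. $\hat{\Omega}_{uv}(t_i)=0$ for all $u\in G_1$, $v\in G_2$, $i\in\mathcal{N}$, if and only if $$\frac{1}{|\mathcal{N}|}\sum_{i\in\mathcal{N}}\hat{\Sigma}_{uv}(t_i)^2\le\lambda^2\qquad\text{for all } u\in G_1,\ v\in G_2.$$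
   Context: In the paper, $\mathcal{N}=\mathcal{N}_{k,d}=\{i:|t_i-t_k|\le d\}$ is the set of indices of observation times $0\le t_1\le\dots\le t_N\le 1$ within distance $d$ of $t_k$, and $\hat{\bm{\Sigma}}(t)=\sum_{j=1}^N \omega_h^{t_j}(t)\bm{x}_j\bm{x}_j^T$ is a kernel estimate of the covariance matrix, with weights $\omega_h^{t_j}(t)=K((t_j-t)/h)/\sum_{j'}K((t_{j'}-t)/h)$ for a symmetric nonnegative kernel $K$ and bandwidth $h>0$, based on observations $\bm{x}_j\in\mathbb{R}^p$. The objective $L$ is strictly convex, so its minimizer, when it exists, is unique. *)

From HB Require Import structures.
From mathcomp Require Import all_boot all_order all_algebra.
From mathcomp Require Import all_classical all_reals all_analysis.
Set Implicit Arguments. Unset Strict Implicit. Unset Printing Implicit Defensive.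
Import Order.TTheory GRing.Theory Num.Theory.
Local Open Scope ring_scope.

Definition psd_mx (R : realType) (p : nat) (A : 'M[R]_p) : Prop :=
  A^T = A /\ forall x : 'cV[R]_p, 0 <= (x^T *m A *m x) 0 0.

Definition pd_mx (R : realType) (p : nat) (A : 'M[R]_p) : Prop :=
  A^T = A /\ forall x : 'cV[R]_p, x != 0 -> 0 < (x^T *m A *m x) 0 0.

Definition objL (R : realType) (p : nat) (I : finType)
    (Sig : I -> 'M[R]_p) (lambda : R) (Om : I -> 'M[R]_p) : R :=
  (Num.sqrt (#|I|%:R))^-1 *
    (\sum_(i : I) (\tr (Om i *m Sig i) - ln (\det (Om i))))
  + lambda * \sum_(u < p) \sum_(v < p | u != v)
       Num.sqrt (\sum_(i : I) (Om i u v) ^+ 2).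

Definition is_minimizer (R : realType) (p : nat) (I : finType)
    (Sig : I -> 'M[R]_p) (lambda : R) (Omhat : I -> 'M[R]_p) : Prop :=
  (forall i, pd_mx (Omhat i)) /\
  forall Om : I -> 'M[R]_p, (forall i, pd_mx (Om i)) ->
    objL Sig lambda Omhat <= objL Sig lambda Om.

From HB Require Import structures.
From mathcomp Require Import all_boot all_order all_algebra.
From mathcomp Require Import all_classical all_reals all_analysis.
From mathcomp Require Import complex ring lra.
Import Order.TTheory GRing.Theory Num.Theory.
Set Implicit Arguments.
Unset Strict Implicit.
Unset Printing Implicit Defensive.
Local Open Scope ring_scope.

(* Let J be the diagonal matrix with entry 1 on G1 and -1 on G2.  Conjugation
   by J negates exactly the cross entries and preserves positive definiteness
   and the determinant, so the block-diagonal part (M + J M J) / 2 of a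
   positive definite M has determinant at least det M, with equality only when
   M = J M J: the eigenvalues of (J M J) M^-1 are positive with product 1 and
   AM-GM applies.
   If the cross covariances are small, replacing every Omega(t_i) by its
   block-diagonal part therefore lowers the log-det term strictly unless the
   cross entries already vanish, and by Cauchy-Schwarz on each cross pair it
   does not increase the trace and penalty terms.  Conversely, if Omega is
   block diagonal and the condition fails at (u, v), moving each Omega(t_i)
   by -t Sigma_uv(t_i) (e_u e_v^T + e_v e_u^T) decreases the trace term at rate
   sum_i Sigma_uv(t_i)^2 / sqrt |N| and increases the penalty at rate
   lambda sqrt (sum_i Sigma_uv(t_i)^2), while the log-det term moves only by
   O(t^2) because J-symmetry kills the linear term of the determinant. *)

Lemma quadratic_ge0_discr (R : realFieldType) (A B C : R) : 0 <= C ->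
  (forall t, 0 <= A + 2 * t * B + t ^+ 2 * C) -> B ^+ 2 <= A * C.
Proof.
move=> C0 h; have A0 : 0 <= A by have := h 0; rewrite expr0n /=; lra.
have [Ce|Cn0] := eqVneq C 0.
  rewrite Ce mulr0; have [->|Bn0] := eqVneq B 0; first by rewrite expr0n.
  have := h (- (A + 1) / (2 * B)); rewrite Ce mulr0 addr0.
  have -> : 2 * (- (A + 1) / (2 * B)) * B = - (A + 1) by field.
  lra.
have Cpos : 0 < C by rewrite lt_def Cn0.
have := h (- B / C).
have -> : A + 2 * (- B / C) * B + (- B / C) ^+ 2 * C = A - B ^+ 2 / C by field.
by rewrite subr_ge0 ler_pdivrMr.
Qed.

Lemma cauchy_schwarz_sum (R : rcfType) (I : finType) (f g : I -> R) :
  `|\sum_i f i * g i| <= Num.sqrt (\sum_i f i ^+ 2) * Num.sqrt (\sum_i g i ^+ 2).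
Proof.
have sq_ge0 (h : I -> R) : 0 <= \sum_i h i ^+ 2 by apply: sumr_ge0 => i _; exact: sqr_ge0.
rewrite -sqrtrM // -sqrtr_sqr ler_wsqrtr // quadratic_ge0_discr // => t.
have -> : \sum_i f i ^+ 2 + 2 * t * (\sum_i f i * g i) + t ^+ 2 * \sum_i g i ^+ 2
    = \sum_i (f i + t * g i) ^+ 2.
  by rewrite !mulr_sumr -!big_split; apply: eq_bigr => i _ /=; ring.
exact: sq_ge0.
Qed.

(* From [ln y <= y - 1] at [y = (1 + x)^-1]. *)
Lemma ln1Dx_ge (R : realType) (x : R) : `|x| <= 2^-1 -> - (2 * `|x|) <= ln (1 + x).
Proof.
move=> x_small; have x1_gt0 : 0 < 1 + x by move: x_small; rewrite ler_norml; lra.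
have := @le_ln1Dx R ((1 + x)^-1 - 1).
rewrite (_ : 1 + ((1 + x)^-1 - 1) = (1 + x)^-1); last by ring.
rewrite lnV ?posrE // => /(_ _) ln_le.
have : (1 + x)^-1 - 1 <= 2 * `|x|.
  rewrite (_ : (1 + x)^-1 - 1 = - x / (1 + x)); last by field; rewrite gt_eqF.
  rewrite ler_pdivrMr //; case: (lerP 0 x) => [x_ge0|x_lt0].
    by rewrite ger0_norm //; nra.
  by move: x_small; rewrite ltr0_norm //; nra.
suff : - ln (1 + x) <= (1 + x)^-1 - 1 by lra.
by apply: ln_le; rewrite ltrBrDl subrr invr_gt0.
Qed.

Lemma exists_pos_mul_lt (R : realFieldType) (a e : R) : 0 <= a -> 0 < e ->
  exists2 t : R, 0 < t <= 1 & t * a < e.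
Proof.
move=> a_ge0 e_gt0; exists (e / (1 + e + a)).
  by rewrite divr_gt0 ?ler_pdivrMr ?mul1r; lra.
by rewrite mulrAC ltr_pdivrMr; nra.
Qed.

Lemma ler_term_sum (R : numDomainType) (I : finType) (F : I -> R) j :
  (forall i, 0 <= F i) -> F j <= \sum_i F i.
Proof. by move=> F_ge0; rewrite (bigD1 j) //= lerDl sumr_ge0. Qed.

Lemma sum_offdiag_pair (V : nmodType) p (F : 'I_p -> 'I_p -> V) u v : u != v ->
  (forall a b, ~~ (((a == u) && (b == v)) || ((a == v) && (b == u))) -> F a b = 0) ->
  \sum_a \sum_(b | a != b) F a b = F u v + F v u.
Proof.
move=> uv F0; rewrite (bigD1 u) //= [X in _ + X](bigD1 v) 1?eq_sym //=.
rewrite [\sum_(b | u != b) _](bigD1 v) //= big1 => [|b /andP [_ bv]]; last first.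
  by apply: F0; rewrite eqxx (negbTE bv) (negbTE uv).
rewrite [\sum_(b | v != b) _](bigD1 u) 1?eq_sym //= big1 => [|b /andP [_ bu]]; last first.
  by apply: F0; rewrite eqxx (negbTE bu) eq_sym (negbTE uv).
rewrite big1 => [|a /andP [au av]]; last first.
  by apply: big1 => b _; apply: F0; rewrite (negbTE au) (negbTE av).
by rewrite !addr0.
Qed.

Lemma form_sym (R : comNzRingType) n (M : 'M[R]_n) (x y : 'cV[R]_n) :
  M^T = M -> (y^T *m M *m x) 0 0 = (x^T *m M *m y) 0 0.
Proof.
move=> MT; have -> : (y^T *m M *m x) 0 0 = (y^T *m M *m x)^T 0 0 by rewrite [RHS]mxE.
by rewrite !trmx_mul trmxK MT mulmxA.
Qed.

Lemma form_delta_mx (R : comNzRingType) n (x : 'cV[R]_n) a b :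
  (x^T *m delta_mx a b *m x) 0 0 = x a 0 * x b 0.
Proof.
rewrite -(mul_delta_mx (0 : 'I_1)) mulmxA -colE -mulmxA -rowE.
by rewrite mxE big_ord1 !mxE.
Qed.

Lemma mxtrace_delta_mul (R : comNzRingType) n (M : 'M[R]_n) a b :
  \tr (delta_mx a b *m M) = M b a.
Proof.
rewrite -(mul_delta_mx (0 : 'I_1)) -mulmxA -rowE mxtrace_mulC -colE.
by rewrite /mxtrace big_ord1 !mxE.
Qed.

Section PositiveDefinite.
Variables (R : realType) (n : nat).
Implicit Types (A B M : 'M[R]_n) (x : 'cV[R]_n).

Lemma pd_mx_psd A : pd_mx A -> psd_mx A.
Proof.
move=> [AT pA]; split=> // x; have [->|x0] := eqVneq x 0; last exact/ltW/pA.
by rewrite mulmx0 mxE.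
Qed.

Lemma psd_mx_diag_ge0 A k : psd_mx A -> 0 <= A k k.
Proof.
by move=> [_ /(_ (delta_mx k 0))]; rewrite trmx_delta -rowE -colE !mxE.
Qed.

Lemma pd_mx_unit A : pd_mx A -> A \in unitmx.
Proof.
move=> [_ pA]; rewrite unitmxE unitfE; apply/negP => /det0P [v v0 vA].
by have := pA v^T; rewrite trmx_eq0 v0 trmxK vA mul0mx mxE ltxx => /(_ isT).
Qed.

Lemma pd_mx_inv A : pd_mx A -> pd_mx (invmx A).
Proof.
move=> pdA; have uA := pd_mx_unit pdA; case: pdA => AT pA.
have WT : (invmx A)^T = invmx A by rewrite trmx_inv AT.
split=> // y y0; have Wy0 : invmx A *m y != 0.
  by apply: contraNneq y0 => e; rewrite -[y](mulKVmx uA) e mulmx0.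
have := pA _ Wy0; rewrite trmx_mul WT -!mulmxA (mulmxA A) (mulmxV uA) mul1mx.
by rewrite !mulmxA.
Qed.

Lemma pd_mx1 : pd_mx (1%:M : 'M[R]_n).
Proof.
split=> [|x x0]; first exact: trmx1.
have [k xk] : exists k, x k 0 != 0.
  apply/existsP; apply: contraNT x0; rewrite negb_exists => /forallP x0.
  by apply/eqP/matrixP => i j; rewrite (ord1 j) mxE; apply/eqP/negPn.
rewrite mulmx1 mxE (bigD1 k) //= mxE -expr2 ltr_pwDl ?exprn_even_gt0 //.
by apply: sumr_ge0 => i _; rewrite mxE -expr2 sqr_ge0.
Qed.

Lemma pd_mx_avg A B : pd_mx A -> pd_mx B -> pd_mx (2^-1 *: (A + B)).
Proof.
move=> [AT pA] [BT pB]; split=> [|x x0]; first by rewrite linearZ linearD /= AT BT.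
rewrite -scalemxAr -scalemxAl mulmxDr mulmxDl 2!mxE.
by rewrite mulr_gt0 ?invr_gt0 ?addr_gt0 ?pA ?pB.
Qed.

Lemma cauchy_schwarz_form M (a x : 'cV[R]_n) : psd_mx M ->
  ((a^T *m M *m x) 0 0) ^+ 2 <= (a^T *m M *m a) 0 0 * (x^T *m M *m x) 0 0.
Proof.
move=> [MT pM]; apply: quadratic_ge0_discr => [|t]; first exact: pM.
have := pM (a + t *: x); have := form_sym a x MT.
rewrite [(_ + _)^T]linearD /= [(_ *: _)^T]linearZ /= !mulmxDl !mulmxDr.
rewrite -!scalemxAl -!scalemxAr !mxE => ->.
by congr (0 <= _); ring.
Qed.

(* The choice [a = invmx M *m delta_mx k 0] in Cauchy-Schwarz. *)
Lemma sqr_coord_le_form M x k : pd_mx M ->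
  x k 0 ^+ 2 <= invmx M k k * (x^T *m M *m x) 0 0.
Proof.
move=> pdM; have uM := pd_mx_unit pdM.
have WT : (invmx M)^T = invmx M by rewrite trmx_inv pdM.1.
have := cauchy_schwarz_form (invmx M *m delta_mx k 0) x (pd_mx_psd pdM).
rewrite trmx_mul WT trmx_delta -!mulmxA (mulmxA M) (mulmxV uM) mul1mx.
by rewrite (mulmxA (invmx M)) (mulVmx uM) mul1mx mulmxA -rowE -colE -rowE !mxE.
Qed.

End PositiveDefinite.

Section CharPoly.
Variables (R : comNzRingType) (n : nat).

Lemma horner_char_poly (N : 'M[R]_n) a : (char_poly N).[a] = \det (a%:M - N).
Proof.
rewrite /char_poly -horner_evalE -det_map_mx; congr (\det _).
apply/matrixP => i j; rewrite /char_poly_mx !mxE /= horner_evalE.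
by case: eqP => _; rewrite !hornerE.
Qed.

Lemma det_scalar_addmx (N : 'M[R]_n) (d : 'I_n -> R) a :
  char_poly N = \prod_i ('X - (d i)%:P) -> \det (a%:M + N) = \prod_i (a + d i).
Proof.
move=> hN; have sgn_prod : \prod_i - (a + d i) = (-1) ^+ n * \prod_i (a + d i).
  by rewrite prodrN card_ord.
apply: (@lreg_sign _ n); rewrite -sgn_prod.
have -> : (-1) ^+ n * \det (a%:M + N) = \det ((- a)%:M - N).
  by rewrite -detZ scaleN1r opprD raddfN.
rewrite -horner_char_poly hN horner_prod.
by apply: eq_bigr => i _; rewrite hornerXsubC opprD.
Qed.

End CharPoly.

Section Spectrum.
Variable R : realType.
Local Notation cmx A := (map_mx (real_complex R) A).
Local Open Scope complex_scope.

Lemma complex_form_rect n (M : 'M[R]_n) (x y : 'rV[R]_n) : M^T = M ->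
  ((cmx x + 'i *: cmx y) *m cmx M *m (cmx x^T - 'i *: cmx y^T)) 0 0 =
  ((x *m M *m x^T) 0 0 + (y *m M *m y^T) 0 0)%:C.
Proof.
move=> MT; have := form_sym x^T y^T MT; rewrite !trmxK.
rewrite !mulmxDl !mulmxBr -!scalemxAl -!scalemxAr -!map_mxM.
move: (x *m M *m x^T) (y *m M *m x^T) (x *m M *m y^T) (y *m M *m y^T) => a b c e sym.
rewrite !mxE sym rmorphD /=.
have i2 : 'i * 'i = -1 :> R[i] by rewrite -expr2 sqr_i.
by rewrite !mulrA i2; ring.
Qed.

(* Pairing [v *m (B *m invmx A) = z *: v] with the conjugate of [v] gives
   [z] as a quotient of two positive quadratic forms. *)
Lemma eigenvalue_pd_mulmxV n (A B : 'M[R]_n) z : pd_mx A -> pd_mx B ->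
  eigenvalue (cmx (B *m invmx A)) z -> exists2 r : R, 0 < r & z = r%:C.
Proof.
move=> pdA pdB /eigenvalueP [v vN v0].
set x := map_mx (@complex.Re R) v; set y := map_mx (@complex.Im R) v.
have vxy : v = cmx x + 'i *: cmx y.
  by apply/matrixP => i j; rewrite !mxE [LHS]complexE mulrC.
have form_gt0 M : pd_mx M -> 0 < (x *m M *m x^T) 0 0 + (y *m M *m y^T) 0 0.
  move=> pdM; have [_ psdM] := pd_mx_psd pdM.
  have := psdM x^T; have := psdM y^T; rewrite !trmxK.
  have [x0|xn0] := eqVneq x 0.
    have [y0|yn0] := eqVneq y 0.
      by move: v0; rewrite vxy x0 y0 map_mx0 scaler0 addr0 eqxx.
    have := pdM.2 y^T; rewrite trmx_eq0 yn0 trmxK => /(_ isT); lra.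
  have := pdM.2 x^T; rewrite trmx_eq0 xn0 trmxK => /(_ isT); lra.
have vB : v *m cmx B = z *: (v *m cmx A).
  rewrite scalemxAl -vN map_mxM -!mulmxA -[cmx (invmx A) *m _]map_mxM.
  by rewrite mulVmx ?pd_mx_unit // map_mx1 mulmx1.
have := congr1 (fun u => (u *m (cmx x^T - 'i *: cmx y^T)) 0 0) vB.
rewrite /= -scalemxAl [X in _ = X]mxE vxy !complex_form_rect ?pdA.1 ?pdB.1 //.
set qA := (x *m A *m x^T) 0 0 + _; set qB := (x *m B *m x^T) 0 0 + _ => qBA.
exists (qB / qA); first by rewrite divr_gt0 ?form_gt0.
by rewrite rmorphM fmorphV /= qBA mulfK // (inj_eq (@complexI R)) gt_eqF ?form_gt0.
Qed.

Lemma char_poly_pd_mulmxV n (A B : 'M[R]_n) : pd_mx A -> pd_mx B ->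
  exists2 d : 'I_n -> R, (forall i, 0 < d i) &
    char_poly (B *m invmx A) = \prod_i ('X - (d i)%:P).
Proof.
move=> pdA pdB; set N := B *m invmx A.
have [sC HC] := closed_field_poly_normal (char_poly (cmx N)).
rewrite (monicP (char_poly_monic _)) scale1r in HC.
have sz : size sC = n.
  by have := size_char_poly (cmx N); rewrite HC size_prod_XsubC => -[].
have real_sC (i : 'I_n) : exists2 r : R, 0 < r & sC`_i = r%:C.
  apply: eigenvalue_pd_mulmxV pdA pdB _.
  by rewrite eigenvalue_root_char HC root_prod_XsubC mem_nth ?sz.
exists (fun i => complex.Re sC`_i) => [i|].
  by have [r r0 ->] := real_sC i.
apply: (@map_poly_inj _ _ (real_complex R)); rewrite map_char_poly HC rmorph_prod.
rewrite (big_nth 0) big_mkord sz; apply: eq_bigr => i _.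
rewrite rmorphB /= map_polyX map_polyC /=.
by have [r _ ->] := real_sC i.
Qed.

Lemma det_pd_gt0 n (A : 'M[R]_n) : pd_mx A -> 0 < \det A.
Proof.
move=> pdA; have [d d_gt0] := char_poly_pd_mulmxV (pd_mx1 R n) pdA.
rewrite invmx1 mulmx1 => /(det_scalar_addmx 0); rewrite raddf0 add0r => ->.
by apply: prodr_gt0 => i _; rewrite add0r.
Qed.

End Spectrum.

Section DetAverage.
Variable R : realType.

(* [x C W C x^T = 0] forces [x C = 0]. *)
Lemma row_mulmx_sym_pd_sqr_eq0 n (C W : 'M[R]_n) (x : 'rV[R]_n) : C^T = C -> pd_mx W ->
  x *m (C *m W) *m (C *m W) = 0 -> x *m (C *m W) = 0.
Proof.
move=> CT pdW; rewrite !mulmxA => xCWCW0.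
have xCWC0 : x *m C *m W *m C = 0.
  by rewrite -(mulmxK (pd_mx_unit pdW) (x *m C *m W *m C)) xCWCW0 mul0mx.
have xC0 : x *m C = 0.
  apply/eqP/negP => /negP xCn0.
  have := pdW.2 (x *m C)^T; rewrite trmx_eq0 => /(_ xCn0).
  by rewrite trmxK trmx_mul CT !mulmxA xCWC0 mul0mx mxE ltxx.
by rewrite xC0 mul0mx.
Qed.

Lemma mulmx_sym_pd_nilpotent n (C W : 'M[R]_n) m : C^T = C -> pd_mx W ->
  (C *m W) ^+ m = 0 -> C *m W = 0.
Proof.
move=> CT pdW; set K := C *m W.
elim: m => [|m IH] Km0; first by rewrite -[K]mulr1 -(expr0 K) Km0 mulr0.
case: m IH Km0 => [|m] IH Km0; first by rewrite -(expr1 K).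
apply: IH; apply/row_matrixP => i; rewrite row0.
have := @row_mulmx_sym_pd_sqr_eq0 _ _ _ (row i (K ^+ m)) CT pdW.
by rewrite -!row_mul !mulmxE -!exprSr Km0 row0 => /(_ erefl).
Qed.

Lemma pd_char_poly_mulmxV_unipotent n (A B : 'M[R]_n) : pd_mx A -> pd_mx B ->
  char_poly (B *m invmx A) = ('X - 1) ^+ n -> A = B.
Proof.
case: n A B => [|k] A B pdA pdB hN; first by rewrite [A]flatmx0 [B]flatmx0.
have := Cayley_Hamilton (B *m invmx A).
rewrite hN rmorphXn rmorphB /= horner_mx_X horner_mx_C.
have -> : B *m invmx A - 1%:M = (B - A) *m invmx A.
  by rewrite mulmxBl mulmxV ?pd_mx_unit.
have BAT : (B - A)^T = B - A by rewrite linearB /= pdA.1 pdB.1.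
move/(mulmx_sym_pd_nilpotent BAT (pd_mx_inv pdA))/(congr1 (mulmx^~ A)).
by rewrite mulmxKV ?pd_mx_unit // mul0mx => /eqP; rewrite subr_eq0 => /eqP.
Qed.

(* Equal determinants make the eigenvalues [d i] of [B *m invmx A] have
   product 1, so AM-GM on each [(d i + 1) / 2] gives the inequality; in the
   equality case every [d i] is 1 and Cayley-Hamilton makes
   [(B - A) *m invmx A] nilpotent. *)
Lemma det_avg_pd n (A B : 'M[R]_n) : pd_mx A -> pd_mx B -> \det A = \det B ->
  \det A <= \det (2^-1 *: (A + B)) ?= iff (A == B).
Proof.
move=> pdA pdB detAB; have uA := pd_mx_unit pdA; have detA_gt0 := det_pd_gt0 pdA.
have [d d_gt0 hN] := char_poly_pd_mulmxV pdA pdB; set N := B *m invmx A in hN.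
have NA : N *m A = B by rewrite mulmxKV.
have prod_d : \prod_i d i = 1.
  have := det_scalar_addmx 0 hN; rewrite raddf0 add0r.
  under [RHS]eq_bigr do rewrite add0r.
  move <-; apply: (mulIf (lt0r_neq0 detA_gt0)).
  by rewrite -det_mulmx NA mul1r.
have d1_eq : [forall i, d i == 1] -> A = B.
  move/forallP => d1; apply: pd_char_poly_mulmxV_unipotent pdA pdB _.
  rewrite hN (eq_bigr (fun=> 'X - 1%:P)) => [|i _]; last by rewrite (eqP (d1 i)).
  by rewrite prodr_const card_ord.
set P := \prod_i ((d i + 1) / 2).
have P_gt0 : 0 < P by apply: prodr_gt0 => i _; rewrite divr_gt0 ?addr_gt0.
have AGM := leif_pprod (fun i _ => ltW (mulr_gt0 (d_gt0 i) ltr01))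
  (fun i (_ : predT i) => leif_AGM2 (d i) 1).
rewrite /= prodrXl -/P (sqrf_eq0 P) (gt_eqF P_gt0) /= in AGM.
rewrite (eq_bigr d (fun i _ => mulr1 _)) prod_d in AGM.
have P_ge1 : 1 <= P by have := AGM.1; nra.
have P1_all : P == 1 -> [forall i, d i == 1].
  by move=> /eqP P1; rewrite -AGM.2 P1 expr1n.
apply/leifP; have [<-|nAB] := eqVneq A B.
  by rewrite -mulr2n -(scaler_nat 2 A) scalerA mulVf ?pnatr_eq0 // scale1r.
have -> : 2^-1 *: (A + B) = (2^-1 *: (1%:M + N)) *m A.
  by rewrite -scalemxAl mulmxDl mul1mx NA.
rewrite det_mulmx detZ (det_scalar_addmx 1 hN) ltr_pMl //.
have -> : 2^-1 ^+ n * \prod_i (1 + d i) = P.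
  rewrite /P big_split /= prodr_const card_ord mulrC.
  by congr (_ * _); apply: eq_bigr => i _; rewrite addrC.
rewrite lt_def P_ge1 andbT; apply: contra nAB => /P1_all/d1_eq ->.
exact: eqxx.
Qed.

End DetAverage.

Section RankTwoPerturbation.
Variables (R : comNzRingType) (n : nat).
Implicit Types (M : 'M[R]_n) (a b u v : 'I_n) (s : R).

Definition sym_delta_mx u v : 'M[R]_n := delta_mx u v + delta_mx v u.

Lemma det_add_scale_delta M a b s :
  \det (M + s *: delta_mx a b) = \det M + s * (\det (M + delta_mx a b) - \det M).
Proof.
rewrite (@determinant_multilinear _ _ _ M (M + delta_mx a b) a (1 - s) s).
- by ring.
- by apply/rowP => j; rewrite !mxE; ring.
- by apply/matrixP => i j; rewrite !mxE eq_sym (negbTE (neq_lift _ _)) /=; ring.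
- by apply/matrixP => i j; rewrite !mxE eq_sym (negbTE (neq_lift _ _)) /=; ring.
Qed.

Lemma det_add_scale_sym_delta M u v : exists c1 c2, forall s,
  \det (M + s *: sym_delta_mx u v) = \det M + s * c1 + s ^+ 2 * c2.
Proof.
set Muv := M + delta_mx u v; set Mvu := M + delta_mx v u.
exists (\det Muv + \det Mvu - 2 * \det M).
exists (\det (Muv + delta_mx v u) - \det Muv - \det Mvu + \det M) => s.
rewrite scalerDr addrA (addrAC M) det_add_scale_delta.
rewrite -[M + _ + delta_mx u v]addrAC !det_add_scale_delta -/Muv -/Mvu.
by ring.
Qed.

End RankTwoPerturbation.

Arguments sym_delta_mx {R n} u v.

Lemma pd_add_scale_sym_delta (R : realType) n (M : 'M[R]_n) u v (s : R) : pd_mx M ->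
  `|s| * (invmx M u u + invmx M v v) < 1 -> pd_mx (M + s *: sym_delta_mx u v).
Proof.
move=> pdM s_small; split.
  by rewrite linearD linearZ /= linearD /= !trmx_delta pdM.1 [delta_mx v u + _]addrC.
move=> x x0; have q_gt0 := pdM.2 x x0.
have xu_le := sqr_coord_le_form x u pdM; have xv_le := sqr_coord_le_form x v pdM.
have Wu := psd_mx_diag_ge0 u (pd_mx_psd (pd_mx_inv pdM)).
have Wv := psd_mx_diag_ge0 v (pd_mx_psd (pd_mx_inv pdM)).
rewrite mulmxDr mulmxDl -scalemxAr -scalemxAl mulmxDr mulmxDl.
rewrite mxE [X in _ + X]mxE [X in s * X]mxE !form_delta_mx.
move: q_gt0 xu_le xv_le s_small Wu Wv.
move: (_ 0 0) (x u 0) (x v 0) (invmx M u u) (invmx M v v) => q xu xv Wuu Wvv.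
move=> q_gt0 xu_le xv_le s_small Wu Wv.
have cross_ge : - (`|s| * (xu ^+ 2 + xv ^+ 2)) <= s * (xu * xv + xv * xu).
  case: (lerP 0 s) => s0; [rewrite ger0_norm // | rewrite ltr0_norm //].
    by have := mulr_ge0 s0 (sqr_ge0 (xu + xv)); nra.
  have ns_ge0 : 0 <= - s by rewrite oppr_ge0 ltW.
  by have := mulr_ge0 ns_ge0 (sqr_ge0 (xu - xv)); nra.
have : `|s| * (xu ^+ 2 + xv ^+ 2) <= `|s| * (Wuu + Wvv) * q.
  by rewrite -mulrA; apply: ler_wpM2l => //; lra.
have : `|s| * (Wuu + Wvv) * q < q by rewrite -[X in _ < X]mul1r ltr_pM2r.
lra.
Qed.

Section SignFlip.
Variables (R : realType) (p : nat) (G : {set 'I_p}).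
Implicit Types (M : 'M[R]_p) (a b u v : 'I_p) (s : R).

Definition side_sign a : R := if a \in G then 1 else -1.
Let sign_mx : 'M[R]_p := diag_mx (\row_j side_sign j).

Definition sign_flip M := sign_mx *m M *m sign_mx.
Definition block_part M := 2^-1 *: (M + sign_flip M).
Definition is_block_diag M := forall a b, (a \in G) != (b \in G) -> M a b = 0.

Lemma side_sign_sqr a : side_sign a * side_sign a = 1.
Proof. by rewrite /side_sign; case: (a \in G); rewrite ?mulrNN mulr1. Qed.

Lemma sign_mx_sqr : sign_mx *m sign_mx = 1%:M.
Proof.
rewrite mulmx_diag -diag_const_mx; congr diag_mx.
by apply/rowP => j; rewrite !mxE side_sign_sqr.
Qed.

Lemma sign_flipE M a b : sign_flip M a b = side_sign a * side_sign b * M a b.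
Proof. by rewrite /sign_flip mul_diag_mx mul_mx_diag !mxE mulrAC mulrC. Qed.

Lemma det_sign_flip M : \det (sign_flip M) = \det M.
Proof.
have det_sign_mx_sqr : \det sign_mx * \det sign_mx = 1 by rewrite -det_mulmx sign_mx_sqr det1.
by rewrite /sign_flip !det_mulmx mulrAC det_sign_mx_sqr mul1r.
Qed.

Lemma pd_sign_flip M : pd_mx M -> pd_mx (sign_flip M).
Proof.
have tr_sign_mx : sign_mx^T = sign_mx by exact: tr_diag_mx.
move=> [MT pM]; split=> [|x x0]; first by rewrite /sign_flip !trmx_mul tr_sign_mx MT mulmxA.
have sx_neq0 : sign_mx *m x != 0.
  by apply: contraNneq x0 => sx0; rewrite -[x]mul1mx -sign_mx_sqr -mulmxA sx0 mulmx0.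
by have := pM _ sx_neq0; rewrite trmx_mul tr_sign_mx /sign_flip !mulmxA.
Qed.

Lemma block_partE M a b :
  block_part M a b = if (a \in G) == (b \in G) then M a b else 0.
Proof.
rewrite /block_part mxE [X in _ * X]mxE sign_flipE /side_sign.
by case: (a \in G); case: (b \in G) => /=; field.
Qed.

Lemma pd_block_part M : pd_mx M -> pd_mx (block_part M).
Proof. by move=> pdM; apply: pd_mx_avg (pd_sign_flip pdM). Qed.

Lemma sign_flip_add_scale_sym_delta M u v s : is_block_diag M ->
  u \in G -> v \notin G ->
  sign_flip (M + s *: sym_delta_mx u v) = M + (- s) *: sym_delta_mx u v.
Proof.
move=> Mblock uG vG; apply/matrixP => a b.
have neq_v x : x \in G -> (x == v) = false by apply: contraTF => /eqP ->.
have neq_u x : x \notin G -> (x == u) = false by apply: contraNF => /eqP ->.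
rewrite sign_flipE !mxE /side_sign.
case aG: (a \in G); case bG: (b \in G).
- by rewrite !neq_v //= !andbF /=; ring.
- by rewrite Mblock ?aG ?bG //; ring.
- by rewrite Mblock ?aG ?bG //; ring.
- by rewrite !neq_u ?aG ?bG //= !andbF /=; ring.
Qed.

Lemma det_add_scale_sym_delta_cross M u v s : is_block_diag M ->
  u \in G -> v \notin G -> \det (M + s *: sym_delta_mx u v) =
    \det M + s ^+ 2 * (\det (M + sym_delta_mx u v) - \det M).
Proof.
move=> Mblock uG vG; have [c1 [c2 detE]] := det_add_scale_sym_delta M u v.
have := det_sign_flip (M + 1 *: sym_delta_mx u v).
rewrite sign_flip_add_scale_sym_delta // !detE sqrrN expr1n !mul1r mulN1r => even.
have c1_0 : c1 = 0 by lra.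
by rewrite -[sym_delta_mx u v]scale1r !detE c1_0 expr1n; ring.
Qed.

End SignFlip.

Arguments side_sign {R p} G a.

Section Objective.
Variables (R : realType) (p : nat) (I : finType) (Sig : I -> 'M[R]_p) (lambda : R).
Variable G : {set 'I_p}.
Hypotheses (I_gt0 : (0 < #|I|)%N) (lambda_gt0 : 0 < lambda).
Hypothesis Sig_sym : forall i, (Sig i)^T = Sig i.
Implicit Types (Om : I -> 'M[R]_p) (a b u v : 'I_p).

Let c : R := (Num.sqrt #|I|%:R)^-1.

Let c_gt0 : 0 < c.
Proof. by rewrite invr_gt0 sqrtr_gt0 ltr0n. Qed.

Lemma le_lambda_c_sqrt Y : 0 <= Y ->
  (c * Num.sqrt Y <= lambda) = (#|I|%:R^-1 * Y <= lambda ^+ 2).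
Proof.
move=> Y_ge0; rewrite /c -sqrtrV // -sqrtrM ?invr_ge0 //.
rewrite -{1}(ger0_norm (ltW lambda_gt0)) -sqrtr_sqr ler_psqrt //.
all: by rewrite qualifE /= ?sqr_ge0 ?mulr_ge0 ?invr_ge0.
Qed.

Definition trace_sum Om := \sum_i \tr (Om i *m Sig i).
Definition logdet_sum Om := \sum_i ln (\det (Om i)).
Definition penalty Om :=
  \sum_(u < p) \sum_(v < p | u != v) Num.sqrt (\sum_i Om i u v ^+ 2).

Lemma objLE Om :
  objL Sig lambda Om = c * (trace_sum Om - logdet_sum Om) + lambda * penalty Om.
Proof. by rewrite /objL sumrB. Qed.

Definition entry_cost Om a b := c * \sum_i Om i a b * Sig i b a +
  lambda * (if a != b then Num.sqrt (\sum_i Om i a b ^+ 2) else 0).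

Lemma trace_penalty_entry_costE Om :
  c * trace_sum Om + lambda * penalty Om = \sum_a \sum_b entry_cost Om a b.
Proof.
have -> : trace_sum Om = \sum_a \sum_b \sum_i Om i a b * Sig i b a.
  transitivity (\sum_i \sum_a \sum_b Om i a b * Sig i b a).
    by apply: eq_bigr => i _; apply: eq_bigr => a _; rewrite mxE.
  by rewrite exchange_big; apply: eq_bigr => a _; rewrite exchange_big.
rewrite /penalty !mulr_sumr -big_split /=; apply: eq_bigr => a _.
rewrite (big_mkcond (fun b => a != b)) !mulr_sumr -big_split /=.
by apply: eq_bigr => b _; rewrite /entry_cost mulr_sumr; case: (a != b); rewrite ?mulr0.
Qed.

Lemma eq_entry_cost Om1 Om2 a b : (forall i, Om1 i a b = Om2 i a b) ->
  entry_cost Om1 a b = entry_cost Om2 a b.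
Proof.
move=> e12; rewrite /entry_cost (eq_bigr _ (fun i _ => congr1 (fun x => x * _) (e12 i))).
by rewrite (eq_bigr _ (fun i _ => congr1 (fun x => x ^+ 2) (e12 i))).
Qed.

Lemma Sig_symE i a b : Sig i a b = Sig i b a.
Proof. by rewrite -[in LHS]Sig_sym mxE. Qed.

Lemma logdet_sum_block_part_lt Om i0 a b : (forall i, pd_mx (Om i)) ->
  (a \in G) != (b \in G) -> Om i0 a b != 0 ->
  logdet_sum Om < logdet_sum (fun i => block_part G (Om i)).
Proof.
move=> Om_pd cross Oab0.
have det_le i := det_avg_pd (Om_pd i) (pd_sign_flip G (Om_pd i))
  (esym (det_sign_flip G (Om i))).
have det_gt0 i := det_pd_gt0 (Om_pd i).
have block_gt0 i := det_pd_gt0 (pd_block_part G (Om_pd i)).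
rewrite /logdet_sum (bigD1 i0) //= [X in _ < X](bigD1 i0) //=.
apply: ltr_leD; last first.
  by apply: ler_sum => i _; rewrite ler_ln ?posrE // (det_le i).
rewrite ltr_ln ?posrE // (lt_leif (det_le i0)); apply: contra Oab0 => /eqP flip_eq.
have := congr1 (fun M : 'M[R]_p => M a b) flip_eq; rewrite /= sign_flipE.
have -> : side_sign G a * side_sign G b = -1 :> R.
  by move: cross; rewrite /side_sign; case: (a \in G); case: (b \in G); rewrite ?mulN1r ?mul1r.
by move/eqP; rewrite mulN1r -subr_eq0 opprK -mulr2n mulrn_eq0.
Qed.

Section BlockPart.
Hypothesis small_cross : forall a b, a \in G -> b \notin G ->
  #|I|%:R^-1 * \sum_i Sig i a b ^+ 2 <= lambda ^+ 2.

Lemma entry_cost_cross_ge0 Om a b : (a \in G) != (b \in G) -> 0 <= entry_cost Om a b.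
Proof.
move=> cross; have ab : a != b by apply: contraNneq cross => ->.
have sqr_ge0 (f : I -> R) : 0 <= \sum_i f i ^+ 2 by apply: sumr_ge0 => i _; apply: sqr_ge0.
have c_sqrt_le : c * Num.sqrt (\sum_i Sig i b a ^+ 2) <= lambda.
  rewrite le_lambda_c_sqrt //; move: cross; case aG: (a \in G); case bG: (b \in G) => //= _.
    under eq_bigr do rewrite -Sig_symE.
    by apply: small_cross; rewrite ?aG ?bG.
  by apply: small_cross; rewrite ?aG ?bG.
have := cauchy_schwarz_sum (fun i => Om i a b) (fun i => Sig i b a).
rewrite /entry_cost ab ler_norml => /andP [cs _].
move: cs c_sqrt_le; set X := Num.sqrt _; set Y := Num.sqrt _; set C := \sum_i _ => cs c_sqrt_le.
have : - (c * (X * Y)) <= c * C by rewrite -mulrN ler_pM2l.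
have : c * (X * Y) <= lambda * X.
  by rewrite mulrCA mulrC ler_wpM2r ?sqrtr_ge0.
lra.
Qed.

Lemma entry_cost_block_part_le Om a b :
  entry_cost (fun i => block_part G (Om i)) a b <= entry_cost Om a b.
Proof.
have [same|cross] := eqVneq (a \in G) (b \in G).
  by rewrite (@eq_entry_cost _ Om) // => i; rewrite block_partE same eqxx.
rewrite (@eq_entry_cost _ (fun=> 0)) => [|i]; last by rewrite block_partE (negbTE cross) mxE.
rewrite /entry_cost big1 => [|i _]; last by rewrite mxE mul0r.
rewrite big1 => [|i _]; last by rewrite mxE expr0n.
by rewrite sqrtr0 if_same !mulr0 addr0 entry_cost_cross_ge0.
Qed.

Lemma objL_block_part_lt Om i0 a b : (forall i, pd_mx (Om i)) ->
  (a \in G) != (b \in G) -> Om i0 a b != 0 ->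
  objL Sig lambda (fun i => block_part G (Om i)) < objL Sig lambda Om.
Proof.
move=> Om_pd cross Oab0; have := logdet_sum_block_part_lt Om_pd cross Oab0.
rewrite -(ltr_pM2l c_gt0) => logdet_lt.
have : c * trace_sum (fun i => block_part G (Om i)) + lambda * penalty (fun i => block_part G (Om i))
    <= c * trace_sum Om + lambda * penalty Om.
  rewrite !trace_penalty_entry_costE; apply: ler_sum => a' _; apply: ler_sum => b' _.
  exact: entry_cost_block_part_le.
rewrite !objLE !mulrBr; lra.
Qed.

End BlockPart.

Section Perturbation.
Variables (Om : I -> 'M[R]_p) (u v : 'I_p).
Hypotheses (Om_pd : forall i, pd_mx (Om i)) (Om_block : forall i, is_block_diag G (Om i)).
Hypotheses (uG : u \in G) (vG : v \notin G).

Definition perturb (s : I -> R) i := Om i + s i *: sym_delta_mx u v.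

Lemma trace_sum_perturb s :
  trace_sum (perturb s) = trace_sum Om + 2 * \sum_i s i * Sig i u v.
Proof.
rewrite /trace_sum mulr_sumr -big_split; apply: eq_bigr => i _ /=.
rewrite mulmxDl mxtraceD -scalemxAl mxtraceZ mulmxDl mxtraceD !mxtrace_delta_mul.
by rewrite Sig_symE; ring.
Qed.

Lemma penalty_perturb s :
  penalty (perturb s) = penalty Om + 2 * Num.sqrt (\sum_i s i ^+ 2).
Proof.
have uv : u != v by apply: contraNneq vG => <-.
have Om_uv i : Om i u v = 0 by apply: Om_block; rewrite uG (negbTE vG).
have Om_vu i : Om i v u = 0 by apply: Om_block; rewrite uG (negbTE vG).
have perturbE i a b : perturb s i a b =
    Om i a b + s i * (((a == u) && (b == v))%:R + ((a == v) && (b == u))%:R).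
  by rewrite !mxE.
have perturb_uv i : perturb s i u v = s i.
  by rewrite perturbE Om_uv !eqxx (negbTE uv) /= !add0r ?addr0 mulr1.
have perturb_vu i : perturb s i v u = s i.
  by rewrite perturbE Om_vu !eqxx eq_sym (negbTE uv) /= !add0r ?addr0 mulr1.
apply/eqP; rewrite addrC -subr_eq /penalty -sumrB; apply/eqP.
under eq_bigr do rewrite -sumrB.
rewrite (sum_offdiag_pair uv) => [|a b /norP [not_uv not_vu]]; last first.
  rewrite (eq_bigr _ (fun i _ => congr1 (fun x => x ^+ 2) (perturbE i a b))).
  rewrite (negbTE not_uv) (negbTE not_vu) /=.
  by under eq_bigr do rewrite addr0 mulr0 addr0; rewrite subrr.
rewrite (eq_bigr _ (fun i _ => congr1 (fun x => x ^+ 2) (perturb_uv i))).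
rewrite (eq_bigr _ (fun i _ => congr1 (fun x => x ^+ 2) (perturb_vu i))).
rewrite [\sum_i Om i u v ^+ 2]big1 => [|i _]; last by rewrite Om_uv expr0n.
rewrite [\sum_i Om i v u ^+ 2]big1 => [|i _]; last by rewrite Om_vu expr0n.
by rewrite sqrtr0 !subr0 mulr_natl mulr2n.
Qed.

Let kappa i : R :=
  `|\det (Om i + sym_delta_mx u v) - \det (Om i)| / \det (Om i).

(* The cross entries of [Om i] vanish, so [\det (perturb s i)] has no term
   linear in [s i] and [ln \det] moves by [O (s i ^+ 2)]. *)
Lemma ln_det_perturb_ge s i : s i ^+ 2 * kappa i <= 2^-1 ->
  ln (\det (Om i)) - 2 * (s i ^+ 2 * kappa i) <= ln (\det (perturb s i)).
Proof.
move=> s_small; have det_gt0 := det_pd_gt0 (Om_pd i).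
set w := s i ^+ 2 * ((\det (Om i + sym_delta_mx u v) - \det (Om i)) / \det (Om i)).
have normw : `|w| = s i ^+ 2 * kappa i.
  by rewrite normrM ger0_norm ?sqr_ge0 // normf_div (gtr0_norm det_gt0).
have w_small : `|w| <= 2^-1 by rewrite normw.
have w1_gt0 : 0 < 1 + w by move: w_small; rewrite ler_norml; lra.
have -> : \det (perturb s i) = \det (Om i) * (1 + w).
  rewrite /perturb (det_add_scale_sym_delta_cross _ (Om_block i) uG vG) /w.
  by field; exact: lt0r_neq0.
by rewrite lnM ?posrE // -normw; have := ln1Dx_ge w_small; lra.
Qed.

Let sg i : R := Sig i u v.
Let S : R := \sum_i sg i ^+ 2.
Let K : R := \sum_i sg i ^+ 2 * kappa i.
Let W i : R := invmx (Om i) u u + invmx (Om i) v v.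
Let P : R := \sum_i `|sg i| * W i.
Let dir (t : R) i : R := - (t * sg i).

Let kappa_ge0 i : 0 <= kappa i.
Proof. by rewrite divr_ge0 // ltW // det_pd_gt0. Qed.

Let K_ge0 : 0 <= K.
Proof. by apply: sumr_ge0 => i _; rewrite mulr_ge0 ?sqr_ge0. Qed.

Let W_ge0 i : 0 <= W i.
Proof.
by have psdW := pd_mx_psd (pd_mx_inv (Om_pd i)); rewrite addr_ge0 ?psd_mx_diag_ge0.
Qed.

Lemma pd_perturb_dir (t : R) i : 0 < t -> t * P < 1 -> pd_mx (perturb (dir t) i).
Proof.
move=> t_gt0 tP_lt1; apply: pd_add_scale_sym_delta (Om_pd i) _.
rewrite /dir normrN normrM (gtr0_norm t_gt0) -mulrA -/(W i).
apply: le_lt_trans tP_lt1; apply: (ler_wpM2l (ltW t_gt0)).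
by apply: (ler_term_sum (F := fun j => `|sg j| * W j)) => j; rewrite mulr_ge0.
Qed.

Lemma logdet_sum_perturb_dir_ge (t : R) : 0 <= t -> t <= 1 -> t * K <= 2^-1 ->
  logdet_sum Om - 2 * (t ^+ 2 * K) <= logdet_sum (perturb (dir t)).
Proof.
move=> t_ge0 t_le1 tK_small.
have dir_kappaE i : dir t i ^+ 2 * kappa i = t ^+ 2 * (sg i ^+ 2 * kappa i).
  by rewrite /dir sqrrN exprMn -mulrA.
rewrite /logdet_sum /K !mulr_sumr -sumrB; apply: ler_sum => i _.
rewrite -dir_kappaE; apply: ln_det_perturb_ge; rewrite dir_kappaE.
have : sg i ^+ 2 * kappa i <= K.
  by apply: (ler_term_sum (F := fun j => sg j ^+ 2 * kappa j)) => j; rewrite mulr_ge0 ?sqr_ge0.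
move/(ler_wpM2l (sqr_ge0 t)); have : t ^+ 2 * K <= t * K.
  by rewrite expr2 -mulrA ler_piMl ?mulr_ge0.
lra.
Qed.

Lemma objL_perturb_dir_le (t : R) : 0 <= t -> t <= 1 -> t * K <= 2^-1 ->
  objL Sig lambda (perturb (dir t)) <=
    objL Sig lambda Om - 2 * (t * (c * S - lambda * Num.sqrt S)) + 2 * (t * (t * (c * K))).
Proof.
move=> t_ge0 t_le1 tK_small.
have traceE : \sum_i dir t i * Sig i u v = - (t * S).
  by rewrite /S mulr_sumr -sumrN; apply: eq_bigr => i _; rewrite /dir /sg; ring.
have penaltyE : Num.sqrt (\sum_i dir t i ^+ 2) = t * Num.sqrt S.
  rewrite (eq_bigr (fun i => t ^+ 2 * sg i ^+ 2)) => [|i _]; last by rewrite /dir sqrrN exprMn.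
  by rewrite -mulr_sumr sqrtrM ?sqr_ge0 // sqrtr_sqr ger0_norm.
rewrite !objLE trace_sum_perturb penalty_perturb traceE penaltyE.
have : c * (logdet_sum Om - logdet_sum (perturb (dir t))) <= c * (2 * (t ^+ 2 * K)).
  by rewrite ler_pM2l //; have := logdet_sum_perturb_dir_ge t_ge0 t_le1 tK_small; lra.
rewrite (_ : c * (2 * _) = 2 * (t * (t * (c * K)))); last by ring.
lra.
Qed.

Lemma objL_perturb_lt :
  lambda ^+ 2 < #|I|%:R^-1 * \sum_i Sig i u v ^+ 2 ->
  exists2 Om' : I -> 'M[R]_p, forall i, pd_mx (Om' i) &
    objL Sig lambda Om' < objL Sig lambda Om.
Proof.
move=> big_cross; pose De := c * S - lambda * Num.sqrt S.
have S_ge0 : 0 <= S by apply: sumr_ge0 => i _; exact: sqr_ge0.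
have P_ge0 : 0 <= P by apply: sumr_ge0 => i _; rewrite mulr_ge0.
have De_gt0 : 0 < De.
  have lt_c_sqrt : lambda < c * Num.sqrt S by rewrite ltNge le_lambda_c_sqrt // -ltNge.
  have sqrtS_gt0 : 0 < Num.sqrt S.
    by rewrite -(pmulr_rgt0 _ c_gt0); apply: lt_trans lt_c_sqrt.
  rewrite /De -{1}(sqr_sqrtr S_ge0) expr2 mulrA -mulrBl mulr_gt0 //; lra.
have min_gt0 : 0 < Num.min 2^-1 De by rewrite lt_min De_gt0 andbT.
have [t t01] := @exists_pos_mul_lt _ (P + K + c * K) _
  (addr_ge0 (addr_ge0 P_ge0 K_ge0) (mulr_ge0 (ltW c_gt0) K_ge0)) min_gt0.
rewrite lt_min => /andP [t_half t_De]; have /andP [t_gt0 t_le1] := t01.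
have tP_ge0 := mulr_ge0 (ltW t_gt0) P_ge0.
have tK_ge0 := mulr_ge0 (ltW t_gt0) K_ge0.
have tcK_ge0 := mulr_ge0 (ltW t_gt0) (mulr_ge0 (ltW c_gt0) K_ge0).
have tK_small : t * K <= 2^-1 by lra.
exists (perturb (dir t)) => [i|]; first by apply: pd_perturb_dir => //; lra.
apply: le_lt_trans (objL_perturb_dir_le (ltW t_gt0) t_le1 tK_small) _.
have : t * (t * (c * K)) < t * De by rewrite ltr_pM2l //; lra.
rewrite -/De; lra.
Qed.

End Perturbation.

End Objective.

Theorem theorem2 (R : realType) (p : nat) (I : finType)
    (Sig : I -> 'M[R]_p) (lambda : R) (Omhat : I -> 'M[R]_p)
    (G1 G2 : {set 'I_p}) :
  (2 <= p)%N ->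
  (0 < #|I|)%N ->
  (forall i, psd_mx (Sig i)) ->
  0 < lambda ->
  is_minimizer Sig lambda Omhat ->
  G1 != finset.set0 -> G2 != finset.set0 ->
  G1 :&: G2 = finset.set0 -> G1 :|: G2 = [set: 'I_p] ->
  (forall u v i, u \in G1 -> v \in G2 -> Omhat i u v = 0) <->
  (forall u v, u \in G1 -> v \in G2 ->
     (#|I|%:R)^-1 * \sum_(i : I) (Sig i u v) ^+ 2 <= lambda ^+ 2).
Proof.
move=> _ I_gt0 Sig_psd lambda_gt0 [Om_pd Om_min] _ _ G12_0 G12_T.
have Sig_sym i : (Sig i)^T = Sig i by case: (Sig_psd i).
have G2E a : (a \in G2) = (a \notin G1).
  have : a \notin G1 :&: G2 by rewrite G12_0 inE.
  have : a \in G1 :|: G2 by rewrite G12_T inE.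
  by rewrite !inE; case: (a \in G1); case: (a \in G2).
split=> [Om_cross0 u v uG1 vG2 | small_cross u v i uG1 vG2].
  have Om_block i : is_block_diag G1 (Omhat i).
    move=> a b; case aG1: (a \in G1); case bG1: (b \in G1) => //= _.
      by apply: Om_cross0; rewrite // G2E bG1.
    by rewrite -[Omhat i]((Om_pd i).1) mxE Om_cross0 // G2E aG1.
  rewrite leNgt; apply/negP => big_cross.
  have vG1 : v \notin G1 by rewrite -G2E.
  have [Om' Om'_pd] :=
    objL_perturb_lt I_gt0 lambda_gt0 Sig_sym Om_pd Om_block uG1 vG1 big_cross.
  by rewrite ltNge Om_min.
apply/eqP/negPn/negP => Om_uv.
have := Om_min _ (fun j => pd_block_part G1 (Om_pd j)); apply/negP; rewrite -ltNge.
apply: (objL_block_part_lt I_gt0 lambda_gt0 Sig_sym _ Om_pd _ Om_uv).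
  by move=> a b aG1 bG1; apply: small_cross; rewrite // G2E.
by rewrite uG1 -G2E vG2.
Qed.
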